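(* Let $T$ be a recurrent operator on a separable Fréchet space $X$. Then every sequence $\omega\in\mathfrak{C}$ admits a subsequence which is stationary.
   Context: For a continuous linear operator $T$ on a Fréchet space $X$: $x$ is recurrent if $T^{\omega_n}x\to x$ for some strictly increasing sequence $(\omega_n)$ of positive integers; $T$ is recurrent if the set of recurrent vectors is dense. $\mathfrak{C}$ is the set of strictly increasing sequences $\omega=(\omega_n)$ of positive integers such that $T^{\omega_n}x\to x$ for some $x\neq 0$; for $\omega\in\mathfrak{C}$, $\mathfrak{L}(\omega)=\{x\in X:T^{\omega_n}x\to x\}$. A sequence $\omega\in\mathfrak{C}$ is stationary if $\overline{\mathfrak{L}(\omega)}=\overline{\mathfrak{L}(\mu)}$ for every subsequence $\mu$ of $\omega$. *)

From HB Require Import structures.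
From mathcomp Require Import all_boot all_order all_algebra.
From mathcomp Require Import all_classical all_reals all_analysis.
Set Implicit Arguments. Unset Strict Implicit. Unset Printing Implicit Defensive.
Import Order.TTheory GRing.Theory Num.Theory.
Local Open Scope classical_set_scope.
Local Open Scope ring_scope.

Section Defs.
Context {K : numFieldType} {X : tvsType K}.

(* Fréchet space: a (locally convex, by tvsType) topological vector space
   that is Hausdorff, metrizable (countable basis of the uniformity) and
   complete (every Cauchy proper filter converges). *)
Definition frechet_space : Prop :=
  [/\ hausdorff_space X,
      countable_uniformity X &
      forall F : set_system X, ProperFilter F -> cauchy F ->
        exists x : X, F --> x].

Definition separable_space : Prop :=
  exists D : set X, countable D /\ dense D.

Definition pos_strict_incr (w : nat -> nat) : Prop :=
  (0 < w 0)%N /\ forall n, (w n < w n.+1)%N.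

Definition strict_incr (phi : nat -> nat) : Prop :=
  forall n, (phi n < phi n.+1)%N.

Variable T : X -> X.

Definition Lset (w : nat -> nat) : set X :=
  [set x | (fun n => iter (w n) T x) @ \oo --> x].

Definition recurrent_vector (x : X) : Prop :=
  exists w, pos_strict_incr w /\ Lset w x.

Definition recurrent_operator : Prop :=
  dense [set x | recurrent_vector x].

Definition frakC (w : nat -> nat) : Prop :=
  pos_strict_incr w /\ exists x : X, x <> 0 /\ Lset w x.

Definition stationary (w : nat -> nat) : Prop :=
  frakC w /\
  forall phi, strict_incr phi -> closure (Lset (w \o phi)) = closure (Lset w).

End Defs.

From HB Require Import structures.
From mathcomp Require Import all_boot all_order all_algebra.
From mathcomp Require Import all_classical all_reals all_analysis.
From mathcomp Require Import zify.
Set Implicit Arguments. Unset Strict Implicit. Unset Printing Implicit Defensive.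
Local Open Scope classical_set_scope.

(* Since X is separable and metrizable, it has a countable neighbourhood base
   (S k). Build nested subsequences psi_0 = id, psi_(k+1) = psi_k \o a_k, where a_k
   is chosen so that L(w \o psi_(k+1)) meets S k as soon as L(w \o v) meets S k
   for some v whose tail is a subsequence of psi_k, and let phi n = psi_n n.
   Passing to a subsequence chi only enlarges L. Conversely, if S k is a basic
   neighbourhood of a point of the closure of L(w \o phi \o chi), then the tail of
   phi \o chi is a subsequence of psi_k, so L(w \o psi_(k+1)) meets S k; and
   L(w \o psi_(k+1)) is contained in L(w \o phi) because the tail of phi is a
   subsequence of psi_(k+1). *)

Lemma strict_incr_ge (h : nat -> nat) : strict_incr h -> forall n, (n <= h n)%N.
Proof. by move=> h_incr; elim=> [|n IHn] //; exact: leq_ltn_trans IHn (h_incr n). Qed.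

Lemma strict_incr_lt (h : nat -> nat) : strict_incr h -> {homo h : m n / (m < n)%N}.
Proof. exact: homo_ltn ltn_trans. Qed.

Lemma strict_incr_comp (h g : nat -> nat) :
  strict_incr h -> strict_incr g -> strict_incr (h \o g).
Proof. by move=> h_incr g_incr n; exact: strict_incr_lt h_incr _ _ (g_incr n). Qed.

Lemma strict_incr_cvg (h : nat -> nat) : strict_incr h -> h @ \oo --> \oo.
Proof.
move=> h_incr A [N _ NA]; exists N => // n /= Nn; apply: NA => /=.
exact: leq_trans Nn (strict_incr_ge h_incr n).
Qed.

Lemma addn_strict_incr k : strict_incr (addn^~ k).
Proof. by move=> n; rewrite addSn. Qed.

Lemma pos_strict_incr_comp (w h : nat -> nat) :
  pos_strict_incr w -> strict_incr h -> pos_strict_incr (w \o h).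
Proof.
move=> [w0 w_incr] h_incr; split; last exact: strict_incr_comp.
apply: leq_trans w0 _; apply: (homo_leq leqnn leq_trans) => // n; exact: ltnW.
Qed.

Definition tail_subseq (v u : nat -> nat) : Prop :=
  exists k g, strict_incr g /\ forall n, v (n + k)%N = u (g n).

Lemma tail_subseq_comp (v u h : nat -> nat) :
  tail_subseq v u -> strict_incr h -> tail_subseq (v \o h) u.
Proof.
move=> [k [g [g_incr vu]]] h_incr.
have hk n : (k <= h (n + k))%N := leq_trans (leq_addl n k) (strict_incr_ge h_incr _).
exists k, (fun n => g (h (n + k) - k))%N; split => [n|n /=]; last by rewrite -vu subnK.
apply: strict_incr_lt => //; have := h_incr (n + k)%N; have := hk n; rewrite addSn; lia.
Qed.

Section Lset.
Context {K : numFieldType} {X : tvsType K} (T : X -> X).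

Lemma Lset_subseq (v h : nat -> nat) : strict_incr h -> Lset T v `<=` Lset T (v \o h).
Proof. by move=> h_incr x vx; apply: cvg_comp (strict_incr_cvg h_incr) vx. Qed.

Lemma Lset_shift (v : nat -> nat) (k : nat) : Lset T (fun n => v (n + k)%N) = Lset T v.
Proof.
apply/seteqP; split; last exact: (Lset_subseq (addn_strict_incr k)).
move=> x vx A /vx [N _ NA]; exists (N + k)%N => // n /= Nn.
have kn : (k <= n)%N by apply: leq_trans Nn; exact: leq_addl.
by rewrite -(subnK kn); apply: NA => /=; rewrite leq_subRL // addnC.
Qed.

Lemma Lset_tail_eq (w v u g : nat -> nat) (k : nat) :
  (forall n, v (n + k)%N = u (g n)) -> Lset T (w \o v) = Lset T (w \o u \o g).
Proof.
move=> vu; rewrite -(Lset_shift (w \o v) k); congr (Lset T _).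
by apply/funext => n /=; rewrite vu.
Qed.

Lemma Lset_tail_subseq (w v u : nat -> nat) :
  tail_subseq v u -> Lset T (w \o u) `<=` Lset T (w \o v).
Proof. by move=> [k [g [g_incr /(Lset_tail_eq w) ->]]]; exact: Lset_subseq. Qed.

Lemma frakC_subseq (w h : nat -> nat) : frakC T w -> strict_incr h -> frakC T (w \o h).
Proof.
move=> [w_pos [x [x0 wx]]] h_incr; split; first exact: pos_strict_incr_comp.
by exists x; split => //; exact: Lset_subseq.
Qed.

End Lset.

Section DiagonalSubseq.
Variable a : nat -> (nat -> nat) -> nat -> nat.
Hypothesis a_incr : forall k f, strict_incr (a k f).

Fixpoint nested_subseq (k : nat) : nat -> nat :=
  if k is k'.+1 then nested_subseq k' \o a k' (nested_subseq k') else id.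

Fixpoint nested_link (k m : nat) : nat -> nat :=
  if m is m'.+1 then nested_link k m' \o a (m' + k) (nested_subseq (m' + k)) else id.

Definition diag_subseq (n : nat) : nat := nested_subseq n n.

Lemma nested_subseq_link k m n : nested_subseq (m + k) n = nested_subseq k (nested_link k m n).
Proof. by elim: m n => [|m IHm] n //=; rewrite addSn /= IHm. Qed.

Lemma nested_subseq_incr k : strict_incr (nested_subseq k).
Proof. by elim: k => [|k IHk] //=; exact: strict_incr_comp. Qed.

Lemma nested_link_incr k m : strict_incr (nested_link k m).
Proof. by elim: m => [|m IHm] //=; exact: strict_incr_comp. Qed.

Lemma diag_subseq_incr : strict_incr diag_subseq.
Proof.
move=> n; apply: (strict_incr_lt (nested_subseq_incr n)).
exact: strict_incr_ge (a_incr n (nested_subseq n)) n.+1.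
Qed.

Lemma diag_tail_subseq k : tail_subseq diag_subseq (nested_subseq k).
Proof.
exists k, (fun n => nested_link k n (n + k)); split => [n /=|n]; last first.
  exact: nested_subseq_link.
apply: (strict_incr_lt (nested_link_incr k n)); rewrite addSn.
exact: strict_incr_ge (a_incr _ _) (n + k).+1.
Qed.

End DiagonalSubseq.

Lemma separable_countable_nbhs_base (U : uniformType) (D : set U) :
  countable_uniformity U -> countable D -> dense D ->
  exists S : nat -> set U, forall (y : U) (N : set U), nbhs y N ->
    exists k, S k `<=` N /\ nbhs y (S k).
Proof.
move=> /countable_uniformityP[g g_small g_ent] /countable_injP[f f_inj] D_dense.
(* [S (pickle (i, j))] is the [g j]-ball around the point of [D] with code [i]. *)
pose S n := if (unpickle n : option (nat * nat)) is Some (i, j)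
  then [set z | exists2 d, D d /\ f d = i & g j (d, z)] else set0.
exists S => y N /nbhsP[E E_ent EN].
have [j gjE] := g_small _ (entourage_split_ent E_ent).
have B_ent : entourage (split_ent (g j)) := entourage_split_ent (g_ent j).
pose W := xsection (split_ent E) y `&` xsection (split_ent (g j))^-1%relation y.
have W_nbhs : nbhs y W.
  by apply: filterI; [exact: nbhs_entourage (entourage_split_ent E_ent)
                     | exact: nbhs_entourage (entourage_inv B_ent)].
have [d [/interior_subset[yd dy] Dd]] : W° `&` D !=set0.
  apply: D_dense; last exact: open_interior.
  by exists y; apply: nbhs_singleton; apply: nbhs_interior.
rewrite /xsection /= in yd dy.
exists (pickle (f d, j)); rewrite /S pickleK; split.
  move=> z [d' [Dd' /f_inj]]; rewrite !inE => /(_ Dd' Dd) -> gz.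
  apply: EN; rewrite /xsection /=; apply/mem_set/(subset_split_ent E_ent).
  by exists d; [exact: set_mem yd | exact: gjE].
apply: filterS (nbhs_entourage y B_ent) => z /set_mem yz; exists d => //.
by apply: (subset_split_ent (g_ent j)); exists y; [exact: set_mem dy | exact: yz].
Qed.

Lemma frakC_stationary_subseq (K : numFieldType) (X : tvsType K) (T : X -> X)
    (S : nat -> set X) :
  (forall (y : X) (N : set X), nbhs y N -> exists k, S k `<=` N /\ nbhs y (S k)) ->
  forall w, frakC T w -> exists phi, strict_incr phi /\ stationary T (w \o phi).
Proof.
move=> S_base w w_frakC.
have choose_a k f : exists b, strict_incr b /\ forall v, tail_subseq v f ->
    Lset T (w \o v) `&` S k !=set0 -> Lset T (w \o (f \o b)) `&` S k !=set0.
  case: (pselect (exists v, tail_subseq v f /\ Lset T (w \o v) `&` S k !=set0)).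
    move=> [v [[j [g [g_incr /(Lset_tail_eq T w) vfg]]] vS]].
    by exists g; split => // _ _ _; rewrite -vfg.
  by move=> no_v; exists id; split => // v vf vS; exfalso; apply: no_v; exists v.
have /choice[a a_spec] : forall k, exists ak : (nat -> nat) -> nat -> nat,
    forall f, strict_incr (ak f) /\ forall v, tail_subseq v f ->
      Lset T (w \o v) `&` S k !=set0 -> Lset T (w \o (f \o ak f)) `&` S k !=set0.
  by move=> k; have [ak ak_spec] := choice (choose_a k); exists ak.
have a_incr k f : strict_incr (a k f) by case: (a_spec k f).
have phi_incr := diag_subseq_incr a_incr.
exists (diag_subseq a); split => //; split; first exact: frakC_subseq.
move=> chi chi_incr; apply/seteqP; split; last exact/closureS/Lset_subseq.
move=> y y_cl N /S_base[k [SN Sy]].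
have tail_k := tail_subseq_comp (diag_tail_subseq a_incr k) chi_incr.
have [x' [x'L x'S]] := (a_spec k _).2 _ tail_k (y_cl _ Sy).
exists x'; split; last exact: SN.
exact: Lset_tail_subseq (diag_tail_subseq a_incr k.+1) _ x'L.
Qed.

Theorem theorem4p2 (K : numFieldType) (X : tvsType K) (T : {linear X -> X}) :
  @frechet_space K X -> @separable_space K X -> continuous T ->
  recurrent_operator T ->
  forall w : nat -> nat, frakC T w ->
    exists phi : nat -> nat, strict_incr phi /\ stationary T (w \o phi).
Proof.
move=> [_ X_cu _] [D [D_count D_dense]] _ _.
have [S S_base] := separable_countable_nbhs_base X_cu D_count D_dense.
exact: frakC_stationary_subseq S_base.
Qed.
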